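(* Let $A\in\mathcal{M}_n$. The following are equivalent: (1) $M(A)$ is $\mathbb{Z}/2$-trivial, i.e. $H^*(M(A);\mathbb{Z}/2)\cong H^*((\mathbb{C}P^1)^n;\mathbb{Z}/2)$ as graded rings; (2) $\alpha^A_j\equiv0\pmod 2$ in $H^2(M(A);\mathbb{Z})$ for $j=1,\dots,n$; (3) every entry of $A$ is an even integer.
   Context: Let $\mathcal{M}_n$ be the set of integral strictly upper triangular $n\times n$ matrices $A=(A^i_j)$ ($A^i_j$ is the $(i,j)$ entry, and $A^i_j=0$ for $i\ge j$). For $A\in\mathcal{M}_n$, $M(A)$ denotes the Bott manifold obtained as the quotient of $(S^3)^n$ ($S^3\subset\mathbb{C}^2$ the unit sphere) by the free $(S^1)^n$-action $(g_1,\dots,g_n)\cdot((z_1,w_1),\dots,(z_n,w_n))=\big(((\prod_{k<j}g_k^{-A^k_j})g_jz_j,\ g_jw_j)\big)_{j=1}^n$. Let $x^A_j\in H^2(M(A);\mathbb{Z})$ be the first Chern class of the line bundle obtained as the quotient of $(S^3)^n\times\mathbb{C}$ where $g$ acts on the $\mathbb{C}$-factor by $g_j^{-1}$. Put $\alpha^A_j=\sum_{i<j}A^i_jx^A_i$. Then $H^*(M(A);\mathbb{Z})=\mathbb{Z}[x^A_1,\dots,x^A_n]/((x^A_j)^2-\alpha^A_jx^A_j\mid j=1,\dots,n)$, with $x^A_1,\dots,x^A_n$ a basis of $H^2(M(A);\mathbb{Z})$. *)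

From HB Require Import structures.
From mathcomp Require Import all_boot all_order all_algebra.
From mathcomp Require Import mpoly.
Set Implicit Arguments. Unset Strict Implicit. Unset Printing Implicit Defensive.
Import Order.TTheory GRing.Theory Num.Theory.
Local Open Scope ring_scope.

(* A : 'M[int]_n with A i j = A^i_j; strictly upper triangular. *)
Definition strictly_upper (n : nat) (A : 'M[int]_n) : Prop :=
  forall i j : 'I_n, (j <= i)%N -> A i j = 0.

Definition in_ideal (R : comRingType) (n : nat) (g : 'I_n -> {mpoly R[n]})
    (p : {mpoly R[n]}) : Prop :=
  exists q : 'I_n -> {mpoly R[n]}, p = \sum_(j < n) q j * g j.

(* alpha^A_j = sum_{i<j} A^i_j x_i, as a linear form over Z; x_j <-> 'X_j *)
Definition alphaZ (n : nat) (A : 'M[int]_n) (j : 'I_n) : {mpoly int[n]} :=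
  \sum_(i < n | (i < j)%N) A i j *: 'X_i.

(* relations of H^*(M(A);Z) = Z[x]/((x_j)^2 - alpha_j x_j) *)
Definition bott_relZ (n : nat) (A : 'M[int]_n) (j : 'I_n) : {mpoly int[n]} :=
  'X_j ^+ 2 - alphaZ A j * 'X_j.

(* the same relations reduced mod 2 : H^*(M(A);Z/2) = F_2[x]/(...) *)
Definition alpha2 (n : nat) (A : 'M[int]_n) (j : 'I_n) : {mpoly 'F_2[n]} :=
  \sum_(i < n | (i < j)%N) (A i j)%:~R *: 'X_i.

Definition bott_rel2 (n : nat) (A : 'M[int]_n) (j : 'I_n) : {mpoly 'F_2[n]} :=
  'X_j ^+ 2 - alpha2 A j * 'X_j.

(* relations of H^*((CP^1)^n; Z/2) = F_2[x]/((x_j)^2) *)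
Definition cp1_rel2 (n : nat) (j : 'I_n) : {mpoly 'F_2[n]} := 'X_j ^+ 2.

(* Graded ring isomorphism  F[x]/(I)  ~=  F[x]/(J)  between two rings presented
   with generators x_1..x_n of (cohomological) degree 2 and relations I, J.
   Such an isomorphism is induced by the ring map p |-> p(y_1,...,y_n) sending
   each generator x_i to a degree-2 class, represented by a linear form y_i;
   it is well defined and injective iff  f p \in (J) <-> p \in (I), and
   surjective iff every q is congruent mod (J) to some f p. *)
Definition graded_presented_iso (F : fieldType) (n : nat)
    (I J : 'I_n -> {mpoly F[n]}) : Prop :=
  exists y : 'I_n -> {mpoly F[n]},
    let f := fun p : {mpoly F[n]} => mmap (fun c : F => c%:MP_[n]) y p in
    [/\ (forall i, y i \is 1.-homog),
        (forall p, in_ideal J (f p) <-> in_ideal I p)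
      & (forall q, exists p, in_ideal J (q - f p))].

Definition Z2_trivial (n : nat) (A : 'M[int]_n) : Prop :=
  graded_presented_iso (cp1_rel2 (n:=n)) (bott_rel2 A).

(* alpha^A_j = 0 mod 2 in H^2(M(A);Z): alpha_j = 2 beta for some beta in H^2,
   i.e. alpha_j - 2 beta lies in the relation ideal, beta a linear form. *)
Definition alpha_even_in_H2 (n : nat) (A : 'M[int]_n) (j : 'I_n) : Prop :=
  exists beta : {mpoly int[n]},
    beta \is 1.-homog /\ in_ideal (bott_relZ A) (alphaZ A j - 2%:R *: beta).

From HB Require Import structures.
From mathcomp Require Import all_boot all_order all_algebra.
From mathcomp Require Import mpoly.
From mathcomp Require Import ring.
Import Order.TTheory GRing.Theory Num.Theory.
Local Open Scope ring_scope.
Set Implicit Arguments. Unset Strict Implicit.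

(* All relations x_j^2 - alpha_j x_j are homogeneous of degree 2, so the part of
   degree <= 2 of an element of the relation ideal only sees the constant terms
   of the multipliers.  Degree 1 then shows that alpha_j is twice a class in H^2
   only if alpha_j is literally twice a linear form, i.e. A has even entries.
   Over F_2, squaring is additive, so in F_2[x]/(x_j^2) every square is a
   constant; a graded isomorphism onto the mod-2 cohomology of M(A) thus forces
   x_j^2 = alpha_j x_j to be congruent to a constant, and comparing the
   coefficients of the monomials x_l^2 and x_i x_j forces alpha_j = 0 mod 2. *)

Section Ideal.
Variables (R : comNzRingType) (n : nat) (g : 'I_n -> {mpoly R[n]}).

Lemma in_ideal0 : in_ideal g 0.
Proof. by exists (fun _ => 0); rewrite big1 // => j _; rewrite mul0r. Qed.

Lemma in_idealD p1 p2 : in_ideal g p1 -> in_ideal g p2 -> in_ideal g (p1 + p2).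
Proof.
move=> [q1 ->] [q2 ->]; exists (fun j => q1 j + q2 j).
by rewrite -big_split /=; apply: eq_bigr => j _; rewrite mulrDl.
Qed.

Lemma in_idealMl r p : in_ideal g p -> in_ideal g (r * p).
Proof.
move=> [q ->]; exists (fun j => r * q j).
by rewrite mulr_sumr; apply: eq_bigr => j _; rewrite mulrA.
Qed.

Lemma in_idealB p1 p2 : in_ideal g p1 -> in_ideal g p2 -> in_ideal g (p1 - p2).
Proof. by move=> h1 h2; apply: in_idealD => //; rewrite -mulN1r; apply: in_idealMl. Qed.

Lemma in_ideal_gen k : in_ideal g (g k).
Proof.
exists (fun j => (j == k)%:R); rewrite (bigD1 k) //= eqxx mul1r big1 ?addr0 //.
by move=> j /negbTE ->; rewrite mul0r.
Qed.

Lemma in_ideal_sum (I : eqType) (s : seq I) (F : I -> {mpoly R[n]}) :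
  (forall i, i \in s -> in_ideal g (F i)) -> in_ideal g (\sum_(i <- s) F i).
Proof.
elim: s => [|a s IH] h; first by rewrite big_nil; apply: in_ideal0.
rewrite big_cons; apply: in_idealD; first by apply: h; rewrite inE eqxx.
by apply: IH => i hi; apply: h; rewrite inE hi orbT.
Qed.

Lemma in_ideal_eq g' p : g =1 g' -> in_ideal g p -> in_ideal g' p.
Proof. by move=> e [q ->]; exists q; apply: eq_bigr => j _; rewrite e. Qed.

End Ideal.

Section LowDegree.
Variables (R : comNzRingType) (n d : nat).

Lemma mcoeffM_dhomog_low (r g : {mpoly R[n]}) m :
  r@_0 = 0 -> g \is d.-homog -> (mdeg m <= d)%N -> (r * g)@_m = 0.
Proof.
move=> r0 hg hm; rewrite mcoeffM big1 // => k /eqP mk.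
have [->|k1n0] := eqVneq (k.1 : 'X_{1..n}) 0%MM; first by rewrite r0 mul0r.
rewrite (dhomog_nemf_coeff hg) ?mulr0 //; apply: contraTneq hm => hk2.
by rewrite mk mdegD hk2 -ltnNge -{1}(add0n d) ltn_add2r lt0n mdeg_eq0.
Qed.

Variable g : 'I_n -> {mpoly R[n]}.
Hypothesis g_homog : forall k, g k \is d.-homog.

Lemma mcoeff_ideal_low q m : (mdeg m <= d)%N ->
  (\sum_k q k * g k)@_m = \sum_k (q k)@_0 * (g k)@_m.
Proof.
move=> hm; rewrite raddf_sum; apply: eq_bigr => k _ /=.
rewrite -[q k](subrK ((q k)@_0)%:MP) mulrDl mcoeffD mcoeffCM.
rewrite mcoeffM_dhomog_low ?add0r ?subrK //.
by rewrite mcoeffB mcoeffC eqxx mulr1 subrr.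
Qed.

Lemma in_ideal_mcoeff_low p m : (mdeg m < d)%N -> in_ideal g p -> p@_m = 0.
Proof.
move=> hm [q ->]; rewrite mcoeff_ideal_low 1?ltnW // big1 // => k _.
by rewrite (dhomog_nemf_coeff (g_homog k)) ?mulr0 // neq_ltn hm.
Qed.

End LowDegree.

Section QuadraticMonomials.
Variable n : nat.
Implicit Types i j k l : 'I_n.

Lemma mdegUU i j : mdeg (U_(i) + U_(j))%MM = 2%N.
Proof. by rewrite mdegD !mdeg1. Qed.

Lemma eqUU_ltn i k l :
  (i < k)%N -> ((U_(i) + U_(k))%MM == (U_(l) + U_(l))%MM) = false.
Proof.
move=> lt; apply/negbTE/eqP => /mnmP /(_ i); rewrite !mnmDE !mnm1E eqxx.
have -> : (k == i) = false by apply/negbTE; rewrite neq_ltn lt orbT.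
by case: (l == i).
Qed.

Lemma eqUU2r i i' j : ((U_(i) + U_(j))%MM == (U_(i') + U_(j))%MM) = (i' == i).
Proof.
apply/eqP/eqP => [/mnmP /(_ i)|->//]; rewrite !mnmDE !mnm1E eqxx => /eqP.
by case: (i' =P i) => //; case: (j == i).
Qed.

Lemma eqUU_diag k l : ((U_(k) + U_(k))%MM == (U_(l) + U_(l))%MM) = (k == l).
Proof.
by apply/eqP/eqP => [/mnmP /(_ k)|->//]; rewrite !mnmDE !mnm1E eqxx; case: eqP.
Qed.

Lemma eqUU0 i j : ((U_(i) + U_(j))%MM == 0%MM) = false.
Proof. by apply/negbTE; rewrite -mdeg_eq0 mdegUU. Qed.

End QuadraticMonomials.

Section BottRelations.
Variables (R : comNzRingType) (n : nat).
Implicit Types (c : 'I_n -> R) (a : 'I_n -> 'I_n -> R) (i j k l : 'I_n).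

Definition linform_below c j : {mpoly R[n]} := \sum_(i < n | (i < j)%N) c i *: 'X_i.

Definition bott_rel a j : {mpoly R[n]} := 'X_j ^+ 2 - linform_below (a^~ j) j * 'X_j.

Lemma mcoeff_linform_below c j i :
  (linform_below c j)@_U_(i) = if (i < j)%N then c i else 0.
Proof.
rewrite raddf_sum /=; under eq_bigr => i' _ do rewrite mcoeffZ mcoeffXU.
case: ifP => hij.
  rewrite (bigD1 i) //= eqxx mulr1 big1 ?addr0 // => i' /andP[_ /negbTE ->].
  by rewrite mulr0.
rewrite big1 // => i' hi'.
by case: eqP => [e|]; [rewrite e hij in hi'|rewrite mulr0].
Qed.

Lemma mcoeff_linform_belowMX c j m :
  (linform_below c j * 'X_j)@_m =
  \sum_(i < n | (i < j)%N) c i * ((U_(i) + U_(j))%MM == m)%:R.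
Proof.
rewrite mulr_suml raddf_sum /=; apply: eq_bigr => i _.
by rewrite -scalerAl mcoeffZ -mpolyXD mcoeffX.
Qed.

Lemma mcoeff_linform_belowMX_diag c j l :
  (linform_below c j * 'X_j)@_(U_(l) + U_(l))%MM = 0.
Proof. by rewrite mcoeff_linform_belowMX big1 // => i hi; rewrite eqUU_ltn ?mulr0. Qed.

Lemma mcoeff_linform_belowMX_off c i j : (i < j)%N ->
  (linform_below c j * 'X_j)@_(U_(i) + U_(j))%MM = c i.
Proof.
move=> hij; rewrite mcoeff_linform_belowMX (bigD1 i) //= eqUU2r eqxx mulr1.
rewrite big1 ?addr0 // => i' /andP[_ hi'].
by rewrite eqUU2r eq_sym (negbTE hi') mulr0.
Qed.

Lemma linform_below_homog c j : linform_below c j \is 1.-homog.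
Proof.
by apply: rpred_sum => i _; apply: rpredZ; rewrite dhomogX; apply/eqP; exact: mdeg1.
Qed.

Lemma bott_rel_homog a j : bott_rel a j \is 2.-homog.
Proof.
have hX : ('X_j : {mpoly R[n]}) \is 1.-homog by rewrite dhomogX; apply/eqP; exact: mdeg1.
apply: rpredB; first by rewrite expr2; exact: (dhomogM hX hX).
exact: (dhomogM (linform_below_homog _ _) hX).
Qed.

Lemma mcoeff_bott_rel_diag a k l : (bott_rel a k)@_(U_(l) + U_(l))%MM = (k == l)%:R.
Proof.
by rewrite mcoeffB mcoeff_linform_belowMX_diag expr2 -mpolyXD mcoeffX eqUU_diag subr0.
Qed.

(* The x_l^2-coefficients force the multipliers to have no constant term, and
   then the x_i x_j-coefficient, which is a i j, must vanish. *)
Lemma in_bott_ideal_linform_belowMX_subC a j b i :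
  in_ideal (bott_rel a) (linform_below (a^~ j) j * 'X_j - b%:MP) -> (i < j)%N ->
  a i j = 0.
Proof.
move=> [q hq] hij.
have coef_hq m : (mdeg m <= 2)%N ->
    (linform_below (a^~ j) j * 'X_j - b%:MP)@_m = \sum_k (q k)@_0 * (bott_rel a k)@_m.
  by move=> hm; rewrite hq (mcoeff_ideal_low (@bott_rel_homog a)).
have q0 l : (q l)@_0 = 0.
  have := coef_hq _ (eq_leq (mdegUU l l)).
  rewrite (bigD1 l) //= big1 => [|k hk]; last first.
    by rewrite mcoeff_bott_rel_diag (negbTE hk) mulr0.
  rewrite mcoeff_bott_rel_diag eqxx mulr1 addr0 mcoeffB mcoeff_linform_belowMX_diag.
  by rewrite mcoeffC eqUU0 mulr0 subrr.
have := coef_hq _ (eq_leq (mdegUU i j)).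
rewrite big1 => [|k _]; last by rewrite q0 mul0r.
by rewrite mcoeffB mcoeff_linform_belowMX_off // mcoeffC eqUU0 mulr0 subr0.
Qed.

End BottRelations.

Section CharTwo.
Variables (R : comNzRingType) (n : nat).
Hypothesis two_eq0 : (2%:R : R) = 0.

Lemma mpoly_two_eq0 : (2%:R : {mpoly R[n]}) = 0.
Proof. by rewrite -mpolyC_nat two_eq0 mpolyC0. Qed.

Lemma sqr_sum_char2 (I : Type) (s : seq I) (F : I -> {mpoly R[n]}) :
  (\sum_(i <- s) F i) ^+ 2 = \sum_(i <- s) F i ^+ 2.
Proof.
elim: s => [|a s IH]; first by rewrite !big_nil expr2 mul0r.
by rewrite !big_cons sqrrD IH -mulr_natr mpoly_two_eq0 mulr0 addr0.
Qed.

Lemma in_ideal_squares_sqrX (m : 'X_{1..n}) : m != 0%MM ->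
  in_ideal (fun j : 'I_n => 'X_j ^+ 2 : {mpoly R[n]}) ('X_[m] ^+ 2).
Proof.
move=> /eqP nz; have [i hi] : exists i, (0 < m i)%N.
  apply/existsP; apply: contra_notT nz; rewrite negb_exists => /forallP h.
  by apply/mnmP => i; rewrite mnm0E; apply/eqP; rewrite -leqn0 leqNgt h.
have -> : m = (m - U_(i) + U_(i))%MM.
  by rewrite submK //; apply/mnm_lepP => k; rewrite mnm1E; case: eqP => // <-.
rewrite mpolyXD exprMn; apply: in_idealMl.
exact: (in_ideal_gen (fun j : 'I_n => 'X_j ^+ 2 : {mpoly R[n]})).
Qed.

Lemma in_ideal_squares_sqr (p : {mpoly R[n]}) :
  in_ideal (fun j : 'I_n => 'X_j ^+ 2 : {mpoly R[n]}) (p ^+ 2 - ((p@_0) ^+ 2)%:MP).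
Proof.
set c := p@_0; set r := p - c%:MP.
have r0 : r@_0 = 0 by rewrite mcoeffB mcoeffC eqxx mulr1 subrr.
have -> : p = c%:MP + r by rewrite addrC subrK.
rewrite sqrrD -mulr_natr mpoly_two_eq0 mulr0 addr0 rmorphXn addrAC subrr add0r.
rewrite [r]mpolyE sqr_sum_char2; apply: in_ideal_sum => m hm.
rewrite exprZn -mul_mpolyC; apply/in_idealMl/in_ideal_squares_sqrX.
by apply: contraTneq hm => ->; rewrite mcoeff_msupp r0 eqxx.
Qed.

End CharTwo.

Lemma mmap_idX (R : nzRingType) n (p : {mpoly R[n]}) :
  mmap (fun c : R => c%:MP_[n]) (fun i => 'X_i) p = p.
Proof.
rewrite /mmap [RHS]mpolyE; apply: eq_bigr => m _.
by rewrite mmap1_id mul_mpolyC.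
Qed.

Lemma F2_two_eq0 : (2%:R : 'F_2) = 0.
Proof. exact: pchar_Fp_0. Qed.

Lemma F2_intr_eq0 (z : int) : (z%:~R : 'F_2) = 0 <-> (2 %| z)%Z.
Proof.
rewrite {1}(divz_eq z 2) rmorphD rmorphM /= [2%:~R]F2_two_eq0 mulr0 add0r.
split; last by move/dvdz_mod0P => ->.
move=> h; apply/dvdz_mod0P.
move: h (modz_ge0 z (isT : (2 != 0 :> int))) (ltz_mod z (isT : (2 != 0 :> int))).
by case: (z %% 2)%Z => [[|[|k]]|k].
Qed.

Section Lemma6p4.
Variables (n : nat) (A : 'M[int]_n).
Hypothesis hA : strictly_upper A.

Lemma alphaZE j : alphaZ A j = linform_below (fun i => A i j) j.
Proof. by []. Qed.

Lemma bott_relZE : bott_relZ A = bott_rel (fun i j => A i j).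
Proof. by []. Qed.

Lemma bott_rel2E : bott_rel2 A = bott_rel (fun i j => (A i j)%:~R : 'F_2).
Proof. by []. Qed.

Lemma even_entries_of_alpha_even :
  (forall j, alpha_even_in_H2 A j) -> forall i j : 'I_n, (2 %| A i j)%Z.
Proof.
move=> h i j; have [hij|] := ltnP i j; last by move/hA ->.
have [beta [_ hbeta]] := h j.
rewrite bott_relZE in hbeta.
have := in_ideal_mcoeff_low (m := U_(i)) (@bott_rel_homog _ _ _) _ hbeta.
rewrite mdeg1 => /(_ isT) /eqP.
rewrite mcoeffB mcoeffZ alphaZE mcoeff_linform_below hij subr_eq0 => /eqP ->.
exact: dvdz_mulr.
Qed.

Lemma alpha_even_of_even_entries :
  (forall i j : 'I_n, (2 %| A i j)%Z) -> forall j, alpha_even_in_H2 A j.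
Proof.
move=> h j; exists (linform_below (fun i => (A i j %/ 2)%Z) j).
split; first exact: linform_below_homog.
rewrite alphaZE /linform_below scaler_sumr -sumrB big1; first exact: in_ideal0.
by move=> i _; rewrite scalerA -scalerBl mulrC divzK ?subrr ?scale0r.
Qed.

Lemma Z2_trivial_of_even_entries :
  (forall i j : 'I_n, (2 %| A i j)%Z) -> Z2_trivial A.
Proof.
move=> h; exists (fun i => 'X_i) => f.
have rel2_sqr : bott_rel2 A =1 cp1_rel2 (n:=n).
  move=> j; rewrite /bott_rel2 /cp1_rel2 /alpha2 big1 ?mul0r ?subr0 // => i _.
  by move/F2_intr_eq0: (h i j) ->; rewrite scale0r.
have f_id p : f p = p by rewrite /f mmap_idX.
split.
- by move=> i; rewrite dhomogX; apply/eqP; exact: mdeg1.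
- by move=> p; rewrite f_id; split; apply: in_ideal_eq => // j; rewrite rel2_sqr.
- by move=> q; exists q; rewrite f_id subrr; apply: in_ideal0.
Qed.

(* A preimage p of x_j under the isomorphism has p^2 congruent to a constant,
   and x_j^2 - f(p)^2 = (x_j + f(p)) (x_j - f(p)) lies in the ideal. *)
Lemma alpha2X_subC_in_ideal : Z2_trivial A -> forall j,
  exists b, in_ideal (bott_rel2 A) (alpha2 A j * 'X_j - b%:MP).
Proof.
case=> y [_ hiff hsurj] j.
set f := mmap _ y in hiff hsurj.
have [p hp] := hsurj 'X_j; exists ((p@_0) ^+ 2).
have hp2 : in_ideal (bott_rel2 A) (f p ^+ 2 - ((p@_0) ^+ 2)%:MP).
  have := (hiff (p ^+ 2 - ((p@_0) ^+ 2)%:MP)).2 (in_ideal_squares_sqr F2_two_eq0 p).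
  by rewrite /f mmapB mmapC rmorphXn.
have hXp : in_ideal (bott_rel2 A) ('X_j ^+ 2 - f p ^+ 2).
  by rewrite subr_sqr mulrC; apply: in_idealMl.
have := in_idealB (in_idealD hXp hp2) (in_ideal_gen (bott_rel2 A) j).
congr in_ideal; rewrite /bott_rel2; ring.
Qed.

Lemma even_entries_of_Z2_trivial : Z2_trivial A -> forall i j : 'I_n, (2 %| A i j)%Z.
Proof.
move=> hZ2 i j; have [hij|] := ltnP i j; last by move/hA ->.
have [b hb] := alpha2X_subC_in_ideal hZ2 j.
rewrite bott_rel2E in hb.
exact/F2_intr_eq0/(in_bott_ideal_linform_belowMX_subC hb).
Qed.

End Lemma6p4.

Theorem lemma6p4 (n : nat) (A : 'M[int]_n) (hA : strictly_upper A) :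
  [/\ (Z2_trivial A <-> forall j : 'I_n, alpha_even_in_H2 A j)
    & ((forall j : 'I_n, alpha_even_in_H2 A j) <->
       (forall i j : 'I_n, (2 %| A i j)%Z))].
Proof.
split; split.
- by move/(even_entries_of_Z2_trivial hA)/alpha_even_of_even_entries.
- by move/(even_entries_of_alpha_even hA)/Z2_trivial_of_even_entries.
- exact: even_entries_of_alpha_even.
- exact: alpha_even_of_even_entries.
Qed.
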